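(* Let $C\subset\mathbb{R}^n$ be a pointed, $n$-dimensional closed convex cone and $\Omega=S^{n-1}\cap\operatorname{int}C^{\circ}$. Let $\mu$ be a nonzero, finite Borel measure on $\Omega$, and let $(\omega_i)_{i\in\mathbb{N}}$ be compact subsets of $\Omega$ with $\omega_i\subset\operatorname{int}\omega_{i+1}$ and $\bigcup_i\omega_i=\Omega$. Let $\mu_i(\sigma)=\mu(\sigma\cap\omega_i)$ and, for $f\in C^+(\omega_i)$, $L_{\mu_i}(f)=\gamma^n([f])\exp\int_{\omega_i}\log f\,d\mu_i$, where $[f]$ is the Wulff shape associated with $(C,\omega_i,f)$. Then there exists a constant $a>0$ such that $\sup\{L_{\mu_i}(f):f\in C^+(\omega_i)\}>a$ for every $i\in\mathbb{N}$.
   Context: $C^{\circ}=\{x:\langle x,y\rangle\le 0\ \forall y\in C\}$. $C^+(\omega)$ denotes the set of continuous functions $\omega\to(0,\infty)$. For a positive continuous $h$ on a compact $\omega\subset\Omega$, the Wulff shape is $[h]=C\cap\bigcap_{u\in\omega}\{y:\langle y,u\rangle\le -h(u)\}$. $\gamma^n$ is the standard Gaussian probability measure on $\mathbb{R}^n$. *)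

From HB Require Import structures.
From mathcomp Require Import all_boot all_order all_algebra.
From mathcomp Require Import all_classical all_reals all_analysis.
Set Implicit Arguments. Unset Strict Implicit. Unset Printing Implicit Defensive.
Import Order.TTheory GRing.Theory Num.Theory numFieldNormedType.Exports.
Local Open Scope classical_set_scope.
Local Open Scope ring_scope.

Section Defs.
Variable R : realType.

Definition dotv (n : nat) (x y : 'rV[R]_n) : R := \sum_(i < n) x ord0 i * y ord0 i.

Definition sphere (n : nat) : set 'rV[R]_n := [set x | dotv x x = 1].

Definition is_cone (n : nat) (C : set 'rV[R]_n) :=
  C 0 /\ forall (l : R) x, 0 <= l -> C x -> C (l *: x).
Definition is_convex_set (n : nat) (C : set 'rV[R]_n) :=
  forall (t : R) x y, 0 <= t <= 1 -> C x -> C y -> C (t *: x + (1 - t) *: y).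
Definition pointed (n : nat) (C : set 'rV[R]_n) :=
  forall x, C x -> C (- x) -> x = 0.
Definition full_dim (n : nat) (C : set 'rV[R]_n) := interior C !=set0.

Definition polar (n : nat) (C : set 'rV[R]_n) : set 'rV[R]_n :=
  [set x | forall y, C y -> dotv x y <= 0].

Definition Omega (n : nat) (C : set 'rV[R]_n) : set 'rV[R]_n :=
  @sphere n `&` interior (polar C).

(* interior of w relative to the ambient set X (here X = Omega) *)
Definition rel_interior (n : nat) (X w : set 'rV[R]_n) : set 'rV[R]_n :=
  [set x | w x /\ exists2 e : R, 0 < e & ball x e `&` X `<=` w].

Definition wulff (n : nat) (C w : set 'rV[R]_n) (h : 'rV[R]_n -> R) : set 'rV[R]_n :=
  C `&` [set y | forall u, w u -> dotv y u <= - h u].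

Definition Borel (n : nat) := g_sigma_algebraType (@open 'rV[R]_n).

Definition gdens (t : R) : R := (Num.sqrt (pi *+ 2))^-1 * expR (- (t ^+ 2) / 2).

(* iterated Gaussian integral over R^n of a nonnegative function
   (by Tonelli this is the integral w.r.t. the product measure gamma^n) *)
Fixpoint gauss_int (n : nat) : ('rV[R]_n -> \bar R) -> \bar R :=
  match n return ('rV[R]_n -> \bar R) -> \bar R with
  | 0 => fun f => f 0
  | n'.+1 => fun f =>
      (\int[@lebesgue_measure R]_(t in [set: R])
         ((gdens t)%:E * gauss_int (fun y : 'rV[R]_n' => f (row_mx (\row_(j < 1) t) y))))%E
  end.

Definition gaussian (n : nat) (A : set 'rV[R]_n) : \bar R :=
  gauss_int (fun x => (\1_A x)%:E).

Definition L_mu (n : nat) (C w : set 'rV[R]_n)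
    (mu : {measure set (Borel n) -> \bar R}) (f : 'rV[R]_n -> R) : R :=
  fine (gaussian (wulff C w f)) *
  expR (fine (\int[fun A : set (Borel n) => mu (A `&` w)]_(x in (w : set (Borel n))) (ln (f x))%:E)%E).

End Defs.

Arguments L_mu {R n} C w mu f.
Arguments rel_interior {R n} X w.
Arguments wulff {R n} C w h.

(* Take f = 1, so that the logarithmic integral vanishes and L_{mu_i}(1) is the
   Gaussian measure of the Wulff shape [1]. As C has interior points and is a
   cone, it contains a ball B(z, 2). For y in B(z, 1) and a unit vector u of C°
   we have y + u in C, hence <y, u> = <y + u, u> - 1 <= -1: the ball B(z, 1)
   lies in [1] for every i, and its Gaussian measure is the required a. *)
From HB Require Import structures.
From mathcomp Require Import all_boot all_order all_algebra.
From mathcomp Require Import all_classical all_reals all_analysis.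
Import Order.TTheory GRing.Theory Num.Theory numFieldNormedType.Exports.
From mathcomp Require Import ring lra.
Local Open Scope classical_set_scope.
Local Open Scope ring_scope.

Section Gaussian.
Context {R : realType}.

(* gauss_int is not known to be measurable, hence monotonicity is proved
   directly from the definition of the integral as a supremum. *)
Lemma ge0_le_integralT d (T : measurableType d) (mu : {measure set T -> \bar R})
    (f g : T -> \bar R) : (forall x, 0 <= f x)%E -> (forall x, f x <= g x)%E ->
  (\int[mu]_x f x <= \int[mu]_x g x)%E.
Proof.
move=> f0 fg; have g0 x : (0 <= g x)%E by exact: le_trans (f0 x) (fg x).
rewrite !ge0_integralTE//; apply: ereal_sup_le => _ [h hf <-].
by exists h => // x; exact: le_trans (hf x) (fg x).
Qed.

Lemma ballRE (x y e : R) : ball x e y <-> `|x - y| < e.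
Proof. by rewrite -ball_normE. Qed.

Lemma ballmxE {n} {x y : 'rV[R]_n} {e : R} : 0 < e ->
  ball x e y <-> forall j, `|x ord0 j - y ord0 j| < e.
Proof.
move=> e0; split; first by case=> _ xy j; apply/ballRE; exact: xy.
by move=> xy; split => // i j; rewrite (ord1 i); apply/ballRE; exact: xy.
Qed.

Lemma row_mx_ball n (z : 'rV[R]_(1 + n)) t (y : 'rV[R]_n) e : 0 < e ->
  ball (z ord0 ord0) e t -> ball (rsubmx z) e y ->
  ball z e (row_mx (\row_(j < 1) t) y).
Proof.
move=> e0 /ballRE zt /(ballmxE e0) zy; apply/(ballmxE e0) => j.
rewrite -(splitK j); case: (fintype.split j) => k /=.
  by rewrite row_mxEl mxE (ord1 k) (_ : lshift n ord0 = ord0)//; exact: val_inj.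
by rewrite row_mxEr; have := zy k; rewrite mxE.
Qed.

Lemma gdens_gt0 (t : R) : 0 < gdens t.
Proof. by rewrite mulr_gt0 ?expR_gt0// invr_gt0 sqrtr_gt0 mulrn_wgt0 ?pi_gt0. Qed.

Lemma gdens_ge0 (t : R) : 0 <= gdens t.
Proof. exact/ltW/gdens_gt0. Qed.

Lemma ler_gdens (t M : R) : `|t| <= M -> gdens M <= gdens t.
Proof.
move=> tM; rewrite ler_wpM2l ?invr_ge0 ?sqrtr_ge0// ler_expR ler_pM2r ?invr_gt0//.
rewrite lerN2 -(real_normK (num_real t)) ler_sqr//; exact: le_trans tM.
Qed.

Lemma integral_gdens : (\int[@lebesgue_measure R]_(t in [set: R]) (gdens t)%:E = 1)%E.
Proof.
rewrite -(integral_normal_pdf 0 1); apply: eq_integral => t _.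
by rewrite /normal_pdf oner_eq0 /normal_peak /normal_fun expr1n mul1r subr0.
Qed.

Lemma gauss_int_ge0 n (f : 'rV[R]_n -> \bar R) : (forall x, 0 <= f x)%E ->
  (0 <= gauss_int f)%E.
Proof.
elim: n f => [|n IH] f f0 /=; first exact: f0.
by apply: integral_ge0 => t _; rewrite mule_ge0 ?lee_fin ?gdens_ge0 ?IH.
Qed.

Lemma gauss_int_le1 n (f : 'rV[R]_n -> \bar R) : (forall x, 0 <= f x <= 1)%E ->
  (gauss_int f <= 1)%E.
Proof.
elim: n f => [|n IH] f f01 /=; first by case/andP: (f01 0).
rewrite -integral_gdens; apply: ge0_le_integralT => t.
  rewrite mule_ge0 ?lee_fin ?gdens_ge0// gauss_int_ge0// => y.
  by case/andP: (f01 (row_mx (\row_(j < 1) t) y)).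
by rewrite -[leRHS]mule1 lee_wpmul2l ?lee_fin ?gdens_ge0 ?IH.
Qed.

Lemma integralZ_indic_ball (z0 : R) {e k : R} : 0 <= e -> 0 <= k ->
  ((\int[@lebesgue_measure R]_(t in [set: R]) (k * \1_(ball z0 e) t)%:E) =
    (k * (e *+ 2))%:E)%E.
Proof.
move=> e0 k0; have mB : measurable (ball z0 e).
  by rewrite ball_itv; exact: measurable_itv.
have := @integralZl_indic _ _ _ (@lebesgue_measure R) _ measurableT (fun=> ball z0 e) k.
move=> /= -> //; last by move=> /lt_le_trans/(_ k0); rewrite ltxx.
by rewrite integral_indic// setIT EFinM -(lebesgue_measure_ball z0 e0).
Qed.

(* The Gaussian weight is at least gdens (|z0| + e) on ball z0 e, of length 2e. *)
Lemma integral_gdens_ball_lb (z0 e c : R) (g : R -> \bar R) : 0 < e -> 0 <= c ->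
  (forall t, 0 <= g t)%E -> (forall t, ball z0 e t -> c%:E <= g t)%E ->
  ((gdens (`|z0| + e) * c * (e *+ 2))%:E <=
    \int[@lebesgue_measure R]_(t in [set: R]) ((gdens t)%:E * g t))%E.
Proof.
move=> e0 c0 g0 gc; set k := gdens (`|z0| + e) * c.
have k0 : 0 <= k by rewrite mulr_ge0 ?gdens_ge0.
rewrite -(integralZ_indic_ball z0 (ltW e0) k0).
apply: ge0_le_integralT => t; first by rewrite lee_fin mulr_ge0.
rewrite indicE; have [/set_mem zt|_] := boolP (t \in (ball z0 e : set R)); last first.
  by rewrite mulr0 mule_ge0 ?lee_fin ?gdens_ge0.
rewrite mulr1 EFinM lee_pmul ?lee_fin ?gdens_ge0 ?gc// ler_gdens//.
move/ballRE: zt; rewrite distrC => zt.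
by rewrite -[t](subrK z0) (le_trans (ler_normD _ _))// addrC lerD2l ltW.
Qed.

Lemma gauss_int_ball_lb {n} (z : 'rV[R]_n) {e} : 0 < e ->
  exists2 c : R, 0 < c & forall f : 'rV[R]_n -> \bar R, (forall x, 0 <= f x)%E ->
    (forall x, ball z e x -> 1 <= f x)%E -> (c%:E <= gauss_int f)%E.
Proof.
move=> e0; elim: n z => [|n IH] z.
  by exists 1 => // f _ f1; apply: f1; rewrite (thinmx0 z); exact: ballxx.
have [c c0 fc] := IH (rsubmx (z : 'rV_(1 + n))).
exists (gdens (`|z ord0 ord0| + e) * c * (e *+ 2)).
  by rewrite mulr_gt0 ?mulrn_wgt0 ?(mulr_gt0 (gdens_gt0 _)).
move=> f f0 f1 /=; apply: integral_gdens_ball_lb (ltW c0) _ _ => // t.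
  exact: gauss_int_ge0.
by move=> zt; apply: fc => // y zy; apply: f1; exact: row_mx_ball.
Qed.

Lemma gaussian_ball_lb {n} (z : 'rV[R]_n) {e} : 0 < e ->
  exists2 c : R, 0 < c & forall A, ball z e `<=` A -> c <= fine (gaussian A).
Proof.
move=> /(gauss_int_ball_lb z) [c c0 fc]; exists c => // A zA.
have cA : (c%:E <= gaussian A)%E.
  apply: fc => x; first by rewrite lee_fin indicE ler0n.
  by move=> /zA Ax; rewrite indicE mem_set.
have A1 : (gaussian A <= 1)%E.
  by apply: gauss_int_le1 => x; rewrite indicE !lee_fin ler0n lern1 leq_b1.
have Afin : gaussian A \is a fin_num.
  by rewrite ge0_fin_numE ?(le_lt_trans A1) ?ltey// (le_trans _ cA) ?lee_fin ?ltW.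
by rewrite -lee_fin fineK.
Qed.

End Gaussian.

Section Cone.
Context {R : realType} {n : nat}.
Implicit Types (C w : set 'rV[R]_n) (x y u : 'rV[R]_n).

Lemma dotvC x y : dotv x y = dotv y x.
Proof. by apply: eq_bigr => j _; rewrite mulrC. Qed.

Lemma dotvDr u x y : dotv u (x + y) = dotv u x + dotv u y.
Proof. by rewrite /dotv -big_split; apply: eq_bigr => j _; rewrite mxE mulrDr. Qed.

Lemma sphere_coord_le1 {u} j : sphere u -> `|u ord0 j| <= 1.
Proof.
move=> uu; have : u ord0 j * u ord0 j <= 1.
  rewrite -uu /dotv (bigD1 j)//= lerDl; apply: sumr_ge0 => k _.
  by rewrite -expr2 sqr_ge0.
by rewrite ler_norml; nra.
Qed.

Lemma scale_ball y r e x : 0 < r -> 0 < e ->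
  ball ((e / r) *: y) e x -> ball y r ((r / e) *: x).
Proof.
move=> r0 e0 /(ballmxE e0) yx; apply/(ballmxE r0) => j; have := yx j.
rewrite !mxE -(ltr_pM2l (divr_gt0 r0 e0)) divfK ?gt_eqF//; apply: le_lt_trans.
have -> : y ord0 j - r / e * x ord0 j = r / e * (e / r * y ord0 j - x ord0 j).
  by field; rewrite !gt_eqF.
by rewrite normrM ger0_norm// divr_ge0 ?ltW.
Qed.

Lemma cone_ball {C e} : is_cone C -> full_dim C -> 0 < e ->
  exists z, ball z e `<=` C.
Proof.
move=> [_ CZ] [y /nbhs_ballP [r r0 yC]] e0; exists ((e / r) *: y) => x zx.
have -> : x = (e / r) *: ((r / e) *: x).
  by rewrite scalerA mulrA divfK ?gt_eqF// divff ?gt_eqF// scale1r.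
by apply: CZ; [rewrite divr_ge0 ?ltW | apply: yC; exact: scale_ball].
Qed.

Lemma ball_sub_wulff1 {C w z} : ball z 2 `<=` C -> w `<=` @sphere R n `&` polar C ->
  ball z 1 `<=` wulff C w (fun=> 1).
Proof.
move=> zC wC y zy; split; first by apply: zC; apply: le_ball zy; rewrite ler1n.
move=> u /wC [uu uC]; suff /uC : C (y + u) by rewrite dotvDr uu dotvC; lra.
apply: zC; apply/(ballmxE (ltr0Sn _ 1)) => j.
have /(ballmxE ltr01)/(_ j) := zy; have := sphere_coord_le1 j uu.
by rewrite !mxE ler_norml ltr_norml !ltr_norml => /andP[? ?] /andP[? ?]; lra.
Qed.

Lemma closed_Borel_measurable (A : set 'rV[R]_n) : closed A ->
  measurable (A : set (Borel R n)).
Proof.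
move=> cA; rewrite -[A]setCK; apply: measurableC; apply: sub_sigma_algebra.
exact: closed_openC.
Qed.

Lemma L_mu_cst1 C w (mu : {measure set Borel R n -> \bar R}) :
  measurable (w : set (Borel R n)) ->
  L_mu C w mu (fun=> 1) = fine (gaussian (wulff C w (fun=> 1))).
Proof.
move=> mw; rewrite /L_mu ln1.
by rewrite (@integral0_eq _ _ _ (mrestr mu mw))// expR0 mulr1.
Qed.

End Cone.

Theorem lemma7p2 (R : realType) (n : nat) (C : set 'rV[R]_n)
  (C_closed : closed C) (C_convex : is_convex_set C) (C_cone : is_cone C)
  (C_pointed : pointed C) (C_full : full_dim C)
  (mu : {measure set (Borel R n) -> \bar R})
  (mu_fin : (mu setT < +oo)%E) (mu_nz : mu setT <> 0%E)
  (mu_on_Omega : mu (~` (Omega C : set (Borel R n))) = 0%E)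
  (w : nat -> set 'rV[R]_n)
  (w_compact : forall i, compact (w i))
  (w_sub : forall i, w i `<=` Omega C)
  (w_incr : forall i, w i `<=` rel_interior (Omega C) (w i.+1))
  (w_cover : \bigcup_i w i = Omega C) :
  exists2 a : R, 0 < a &
    forall i : nat, exists f : 'rV[R]_n -> R,
      [/\ {within w i, continuous f}, (forall u, w i u -> 0 < f u)
        & a < L_mu C (w i) mu f].
Proof.
have [z zC] := cone_ball C_cone C_full (ltr0Sn R 1).
have [c c0 cB] := gaussian_ball_lb z (@ltr01 R).
exists (c / 2); first by rewrite divr_gt0.
move=> i; exists (fun=> 1); split => //.
  by apply: continuous_subspaceT => x; exact: cst_continuous.
have wOmega : w i `<=` @sphere R n `&` polar C.
  by move=> u /w_sub [su /interior_subset pu].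
have wi_closed : closed (w i) := compact_closed (@norm_hausdorff _ _) (w_compact i).
rewrite L_mu_cst1; last exact: closed_Borel_measurable.
by have := cB _ (ball_sub_wulff1 zC wOmega); lra.
Qed.
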